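(* Let $\mathcal{P}$ satisfy properties (a)–(f). For every ordering $e_1,\ldots,e_N$ of the edges of $K_n$ and every $t\in[N]$, $R(t)\le \mathrm{ex}(G(n,t))$.
   Context: All graphs are vertex-labelled, simple and undirected. Let $\mathcal{P}$ be a class of graphs such that: (a) $\mathcal{P}$ is not the class of all graphs; (b) it contains all edgeless graphs; (c) it is closed under isomorphism; (d) it is closed under taking minors; (e) it is weakly addable, i.e. if $G\in\mathcal{P}$ and $u,v$ lie in different components of $G$ then $G+uv\in\mathcal{P}$; (f) if $G\in\mathcal{P}$ and $u,v$ are non-adjacent vertices in the same component of $G$ which is a tree, then $G+uv\in\mathcal{P}$. Let $N=\binom{n}{2}$. Given an ordering $e_1,\ldots,e_N$ of the edges of $K_n$: $P(n,0)$ is the empty graph on $[n]$; for $t\in[N]$, $P(n,t)=P(n,t-1)+e_t$ if $P(n,t-1)+e_t\in\mathcal{P}$ ($e_t$ accepted), and $P(n,t)=P(n,t-1)$ otherwise ($e_t$ rejected). $R(t):=t-e(P(n,t))$ where $e(H)$ is the number of edges. $G(n,t)$ is the graph on $[n]$ with edge set $\{e_1,\ldots,e_t\}$. The excess of a graph $H$ is $\mathrm{ex}(H):=e(H)-|V(H)|+\kappa(H)$, where $\kappa(H)$ is the number of tree components of $H$. *)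

From mathcomp Require Import all_boot all_order all_algebra.
From mathcomp Require Import boolp.
Set Implicit Arguments. Unset Strict Implicit. Unset Printing Implicit Defensive.
Import GRing.Theory Num.Theory.

(* A graph on vertex set [n] = 'I_n is given by its edge set
   E : {set {set 'I_n}}; it is simple when every edge has exactly 2 ends. *)
Definition simple_graph n (E : {set {set 'I_n}}) : Prop :=
  forall e, e \in E -> #|e| = 2.

Definition adj n (E : {set {set 'I_n}}) : rel 'I_n :=
  fun u v => [set u; v] \in E.

Definition connected_in n (E : {set {set 'I_n}}) (B : {set 'I_n}) : Prop :=
  B != set0 /\
  forall u v, u \in B -> v \in B ->
    connect (fun x y => [&& x \in B, y \in B & adj E x y]) u v.

(* H = ('I_m, F) is a minor of G = ('I_n, E): branch sets model. *)
Definition is_minor m (F : {set {set 'I_m}}) n (E : {set {set 'I_n}}) : Prop :=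
  exists f : 'I_m -> {set 'I_n},
    [/\ forall i, connected_in E (f i),
        forall i j, i != j -> [disjoint f i & f j] &
        forall i j, [set i; j] \in F ->
          exists x y, [/\ x \in f i, y \in f j & adj E x y]].

Definition graph_iso m (F : {set {set 'I_m}}) n (E : {set {set 'I_n}}) : Prop :=
  exists f : 'I_m -> 'I_n, bijective f /\
    forall u v, adj F u v = adj E (f u) (f v).

(* the component of u is a tree: it contains no cycle *)
Definition tree_comp n (E : {set {set 'I_n}}) (u : 'I_n) : Prop :=
  ~ exists c : seq 'I_n,
      [/\ 2 < size c, uniq c, cycle (adj E) c & all (connect (adj E) u) c].

Definition comp n (E : {set {set 'I_n}}) (u : 'I_n) : {set 'I_n} :=
  [set v | connect (adj E) u v].

Definition kappa n (E : {set {set 'I_n}}) : nat :=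
  #|[set comp E u | u in [set u : 'I_n | `[< tree_comp E u >] ]]|.

Local Open Scope ring_scope.
Definition excess n (E : {set {set 'I_n}}) : int :=
  (#|E|%:Z - n%:Z + (kappa E)%:Z)%R.
Local Close Scope ring_scope.

Definition graph_class := forall n : nat, pred {set {set 'I_n}}.

Fixpoint proc (P : graph_class) n (s : seq {set 'I_n}) (E : {set {set 'I_n}})
  : {set {set 'I_n}} :=
  match s with
  | [::] => E
  | e :: s' => proc P s' (if P n (e |: E) then e |: E else E)
  end.

Definition Pnt (P : graph_class) n (s : seq {set 'I_n}) (t : nat) :=
  proc P (take t s) set0.

Definition Gnt n (s : seq {set 'I_n}) (t : nat) : {set {set 'I_n}} :=
  [set e in take t s].

Definition edge_ordering n (s : seq {set 'I_n}) : Prop :=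
  uniq s /\ forall e : {set 'I_n}, (e \in s) = (#|e| == 2).

Definition propA (P : graph_class) : Prop :=
  exists n (E : {set {set 'I_n}}), simple_graph E /\ ~~ P n E.
Definition propB (P : graph_class) : Prop := forall n, P n set0.
Definition propC (P : graph_class) : Prop :=
  forall m n (F : {set {set 'I_m}}) (E : {set {set 'I_n}}),
    simple_graph F -> simple_graph E -> graph_iso F E -> P n E -> P m F.
Definition propD (P : graph_class) : Prop :=
  forall m n (F : {set {set 'I_m}}) (E : {set {set 'I_n}}),
    simple_graph F -> simple_graph E -> is_minor F E -> P n E -> P m F.
Definition propE (P : graph_class) : Prop :=
  forall n (E : {set {set 'I_n}}) (u v : 'I_n),
    simple_graph E -> P n E -> ~~ connect (adj E) u v ->
    P n ([set u; v] |: E).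
Definition propF (P : graph_class) : Prop :=
  forall n (E : {set {set 'I_n}}) (u v : 'I_n),
    simple_graph E -> P n E -> u != v -> ~~ adj E u v ->
    connect (adj E) u v -> tree_comp E u -> P n ([set u; v] |: E).

Definition good_class (P : graph_class) : Prop :=
  [/\ propA P, propB P, propC P, propD P & propE P] /\ propF P.

From Pilot Require Import Defs.
From mathcomp Require Import all_boot all_order all_algebra.
From mathcomp Require Import boolp zify.
Import GRing.Theory Num.Theory.
Set Implicit Arguments. Unset Strict Implicit. Unset Printing Implicit Defensive.

(* Along the greedy process we keep the invariant
   n <= e(P(n,t)) + kappa(G(n,t)); since e(G(n,t)) = t it is the inequality
   R(t) <= ex(G(n,t)).  Adding an edge to a graph destroys at most one tree
   component (two trees merge into one), so an accepted edge, which raises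
   e(P(n,t)) by one, preserves the invariant.  A rejected edge uv must, by (e),
   join vertices already connected in P(n,t-1), and then, by (f), the component
   of u in P(n,t-1) is not a tree; neither is its component in the larger graph
   G(n,t-1), and an edge inside a component that is not a tree leaves kappa
   unchanged. *)

Lemma set2_inj (T : finType) (x y u v : T) :
  [set x; y] = [set u; v] -> (x = u /\ y = v) \/ (x = v /\ y = u).
Proof.
move=> exy.
have /set2P xuv : x \in [set u; v] by rewrite -exy set21.
have /set2P yuv : y \in [set u; v] by rewrite -exy set22.
have /set2P uxy : u \in [set x; y] by rewrite exy set21.
have /set2P vxy : v \in [set x; y] by rewrite exy set22.
by case: xuv yuv uxy vxy => -> [] -> [] ? [] ?; subst; auto.
Qed.

Lemma connect_ind (T : finType) (e : rel T) (S : pred T) x y :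
  S x -> (forall a b, S a -> e a b -> S b) -> connect e x y -> S y.
Proof.
move=> Sx Se /connectP [p + ->]; elim: p x Sx => //= a p IH x Sx /andP[exa].
exact/IH/Se/exa.
Qed.

Section AddEdge.
Variable n : nat.
Implicit Types (E F : {set {set 'I_n}}) (u v w x y z : 'I_n).

Lemma adj_sym E : symmetric (adj E).
Proof. by move=> x y; rewrite /adj setUC. Qed.

Lemma connect_adjC E x y : connect (adj E) x y = connect (adj E) y x.
Proof. exact: (sym_connect_sym (adj_sym E)). Qed.

Lemma connect_adj_sub E F x y :
  E \subset F -> connect (adj E) x y -> connect (adj F) x y.
Proof. by move=> sEF; apply: connect_sub => a b Eab; apply/connect1/(subsetP sEF). Qed.

Lemma adj_addedgeP E u v x y : adj ([set u; v] |: E) x y ->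
  [\/ adj E x y, x = u /\ y = v | x = v /\ y = u].
Proof.
rewrite /adj in_setU1 => /orP[/eqP/set2_inj[]|].
- by constructor 2.
- by constructor 3.
- by constructor 1.
Qed.

Lemma adj_addedge_avoid E u v x y :
  x != u -> y != u -> adj ([set u; v] |: E) x y = adj E x y.
Proof.
move=> xu yu; apply/idP/idP; last by rewrite /adj in_setU1 => ->; rewrite orbT.
by case/adj_addedgeP => [//|[/eqP]|[_ /eqP]]; rewrite ?(negbTE xu) ?(negbTE yu).
Qed.

Lemma connect_addedge E u v x y : connect (adj ([set u; v] |: E)) x y ->
  [|| connect (adj E) x y, connect (adj E) x u | connect (adj E) x v].
Proof.
set S := [pred z | [|| connect (adj E) x z, connect (adj E) x u | connect (adj E) x v]].
apply: (connect_ind (S := S)) => [|a b]; first by rewrite inE connect0.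
rewrite !inE; case/or3P=> [xa|->|->]; rewrite ?orbT //.
case/adj_addedgeP=> [ab|[ea _]|[ea _]].
- by rewrite (connect_trans xa (connect1 ab)).
- by rewrite -ea xa orbT.
- by rewrite -ea xa !orbT.
Qed.

Lemma connect_addedge_far E u v w z :
  ~~ connect (adj E) w u -> ~~ connect (adj E) w v ->
  connect (adj ([set u; v] |: E)) w z = connect (adj E) w z.
Proof.
move=> wu wv; apply/idP/idP => [/connect_addedge|]; last exact/connect_adj_sub/subsetUr.
by rewrite (negbTE wu) (negbTE wv) !orbF.
Qed.

Lemma tree_comp_sub E F u : F \subset E -> tree_comp E u -> tree_comp F u.
Proof.
move=> sFE tE [c [c_gt2 uc cFc uc_conn]]; apply: tE; exists c; split=> //.
- by apply: sub_cycle cFc => a b; apply: (subsetP sFE).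
- by apply/allP => z /(allP uc_conn); apply: connect_adj_sub.
Qed.

Lemma tree_comp_connect E u w : connect (adj E) u w -> tree_comp E u -> tree_comp E w.
Proof.
move=> uw tu [c [c_gt2 uc cEc wc_conn]]; apply: tu; exists c; split=> //.
by apply/allP => z /(allP wc_conn); apply: connect_trans uw.
Qed.

Lemma comp_connect E u w : connect (adj E) u w -> Defs.comp E u = Defs.comp E w.
Proof.
move=> uw; apply/setP => z; rewrite !inE; apply/idP/idP; last exact: connect_trans.
by apply: connect_trans; rewrite connect_adjC.
Qed.

Lemma adj_addedge_from E u v z : adj ([set u; v] |: E) u z -> z != u ->
  adj E u z \/ z = v.
Proof. by case/adj_addedgeP => [|[_ ->]|[-> ->]]; rewrite ?eqxx; auto. Qed.

(* Rotating the cycle to start at [u], the part avoiding [u] is a path of [E];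
   were an edge at [u] the new one, [u] and [v] would be joined by that path. *)
Lemma cycle_addbridge E u v c : ~~ connect (adj E) u v -> uniq c -> 2 < size c ->
  cycle (adj ([set u; v] |: E)) c -> cycle (adj E) c.
Proof.
move=> nuv; have [uc|unc] := boolP (u \in c); last first.
  move=> _ _; apply: (sub_in_cycle _ (allss c)) => x y xc yc.
  by rewrite adj_addedge_avoid //; apply: contraNneq unc => <-.
have [i p ep] := rot_to uc.
rewrite -(rot_uniq i c) -(size_rot i c) -!(rot_cycle i _ c) {}ep.
case/lastP: p => [|[|a q] b] //; rewrite rcons_cons => uniq_c _.
rewrite /= rcons_path last_rcons => /and3P[ua pab bu].
have [unp a_q] : u \notin a :: rcons q b /\ a \notin rcons q b by case/and3P: uniq_c.
have au : a != u by apply: contraNneq unp => ->; rewrite mem_head.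
have bu' : b != u by apply: contraNneq unp => ->; rewrite inE mem_rcons mem_head orbT.
have ab : a != b by apply: contraNneq a_q => ->; rewrite mem_rcons mem_head.
have pEab : path (adj E) a (rcons q b).
  have avoid_u : {in predC1 u &, subrel (adj ([set u; v] |: E)) (adj E)}.
    by move=> x y xu yu; rewrite adj_addedge_avoid.
  have all_u : all (predC1 u) (a :: rcons q b).
    by apply/allP => z zp; rewrite inE; apply: contraNneq unp => <-.
  by have := sub_in_path avoid_u all_u pab.
have cab : connect (adj E) a b.
  by apply: (path_connect pEab); rewrite inE mem_rcons mem_head orbT.
rewrite adj_sym in bu.
case: (adj_addedge_from ua au) (adj_addedge_from bu bu') => [Eua|av] [Ebu|bv].
- by rewrite Eua rcons_path pEab last_rcons adj_sym Ebu.
- by move: nuv; rewrite -bv (connect_trans (connect1 Eua) cab).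
- by move: nuv; rewrite connect_adjC -av (connect_trans cab) // connect1 // adj_sym.
- by rewrite av bv eqxx in ab.
Qed.

End AddEdge.

Lemma leq_card_setU1 (T : finType) (A B : {set T}) x :
  A \subset x |: B -> #|A| <= #|B|.+1.
Proof.
move=> sAB; apply: leq_trans (subset_leq_card sAB) _.
by rewrite cardsU1 -add1n leq_add2r leq_b1.
Qed.

Definition tree_comps n (E : {set {set 'I_n}}) : {set {set 'I_n}} :=
  [set Defs.comp E w | w in [set w | `[< tree_comp E w >]]].

Section TreeComponents.
Variable n : nat.
Implicit Types (E : {set {set 'I_n}}) (X : {set 'I_n}) (u v w x y z : 'I_n).

Lemma kappaE E : kappa E = #|tree_comps E|.
Proof. by []. Qed.

Lemma tree_compsP E X :
  reflect (exists2 w, tree_comp E w & X = Defs.comp E w) (X \in tree_comps E).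
Proof.
apply: (iffP imsetP) => [[w]|[w tw ->]]; first by rewrite inE => /asboolP; exists w.
by exists w; rewrite // inE; apply/asboolP.
Qed.

Lemma tree_comps_mem E X u :
  X \in tree_comps E -> u \in X -> X = Defs.comp E u /\ tree_comp E u.
Proof.
case/tree_compsP => w tw -> {X}; rewrite inE => wu.
by split; [apply: comp_connect | apply: tree_comp_connect tw].
Qed.

Lemma tree_comp_addedge_far E u v w :
  ~~ connect (adj E) w u -> ~~ connect (adj E) w v ->
  tree_comp E w -> tree_comp ([set u; v] |: E) w.
Proof.
move=> wu wv tw [c [c_gt2 uc cyc wc]]; apply: tw; exists c.
have {}wc : all (connect (adj E) w) c.
  by apply/allP => z /(allP wc); rewrite connect_addedge_far.
split=> //; apply: (sub_in_cycle _ wc cyc) => x y wx _.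
case/adj_addedgeP => [//|[ex _]|[ex _]]; rewrite ex in wx.
- by case/negP: wu.
- by case/negP: wv.
Qed.

Lemma tree_comps_addedge E u v X : X \in tree_comps E ->
  u \notin X -> v \notin X -> X \in tree_comps ([set u; v] |: E).
Proof.
case/tree_compsP => w tw -> {X}; rewrite !inE => wu wv.
apply/tree_compsP; exists w; first exact: tree_comp_addedge_far.
by apply/setP => z; rewrite !inE connect_addedge_far.
Qed.

Lemma tree_comp_addbridge E u v : ~~ connect (adj E) u v ->
  tree_comp E u -> tree_comp E v -> tree_comp ([set u; v] |: E) u.
Proof.
move=> nuv tu tv [[|x p] [c_gt2 uc cyc uc_conn]] //.
have cEc := cycle_addbridge nuv uc c_gt2 cyc.
have xu : connect (adj ([set u; v] |: E)) x u.
  by rewrite connect_adjC; apply: (allP uc_conn); rewrite mem_head.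
have xc_conn : all (connect (adj E) x) (x :: p).
  by apply/allP => z zc; apply: connect_cycle cEc _ _ (mem_head _ _) zc.
have nontree z : connect (adj E) x z -> ~ tree_comp E z.
  move=> xz; apply; exists (x :: p); split=> //.
  by apply/allP => y /(allP xc_conn); apply: connect_trans; rewrite connect_adjC.
by case/or3P: (connect_addedge xu) => /nontree.
Qed.

Lemma tree_comps_addedgeP E u v X : X \in tree_comps E ->
  [\/ X = Defs.comp E u /\ tree_comp E u, X = Defs.comp E v /\ tree_comp E v
     | [/\ u \notin X, v \notin X & X \in tree_comps ([set u; v] |: E)]].
Proof.
move=> XT; have [uX|uX] := boolP (u \in X).
  by constructor 1; apply: tree_comps_mem.
have [vX|vX] := boolP (v \in X).
  by constructor 2; apply: tree_comps_mem.
by constructor 3; rewrite ?tree_comps_addedge.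
Qed.

Lemma kappa_addedge E u v : kappa E <= (kappa ([set u; v] |: E)).+1.
Proof.
rewrite !kappaE; set E' := [set u; v] |: E.
have [cuv|ncuv] := boolP (connect (adj E) u v).
  apply: (@leq_card_setU1 _ _ _ (Defs.comp E u)); apply/subsetP => X.
  case/(tree_comps_addedgeP u v) => [[-> _]|[-> _]|[_ _ XT']];
    by rewrite !inE ?XT' ?(comp_connect cuv) ?eqxx ?orbT.
have [tu|ntu] := pselect (tree_comp E u); last first.
  apply: (@leq_card_setU1 _ _ _ (Defs.comp E v)); apply/subsetP => X.
  case/(tree_comps_addedgeP u v) => [[_ /ntu]|[-> _]|[_ _ XT']] //;
    by rewrite !inE ?XT' ?eqxx ?orbT.
have [tv|ntv] := pselect (tree_comp E v); last first.
  apply: (@leq_card_setU1 _ _ _ (Defs.comp E u)); apply/subsetP => X.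
  case/(tree_comps_addedgeP u v) => [[-> _]|[_ /ntv]|[_ _ XT']] //;
    by rewrite !inE ?XT' ?eqxx ?orbT.
set Y := Defs.comp E' u.
have YT' : Y \in tree_comps E'.
  by apply/tree_compsP; exists u => //; apply: tree_comp_addbridge.
have sub : tree_comps E \subset
           Defs.comp E u |: (Defs.comp E v |: (tree_comps E' :\ Y)).
  apply/subsetP => X; rewrite !inE.
  case/(tree_comps_addedgeP u v) => [[-> _]|[-> _]|[uX _ ->]];
    rewrite ?eqxx ?orbT // andbT.
  have XY : X != Y by apply: contraNneq uX => ->; rewrite inE connect0.
  by rewrite XY !orbT.
apply: leq_trans (leq_card_setU1 sub) _; rewrite ltnS.
by apply: leq_trans (leq_card_setU1 (subxx _)) _; rewrite (cardsD1 Y (tree_comps E')) YT'.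
Qed.

Lemma kappa_addedge_nontree E u v : connect (adj E) u v -> ~ tree_comp E u ->
  kappa E <= kappa ([set u; v] |: E).
Proof.
move=> cuv ntu; rewrite !kappaE; apply/subset_leq_card/subsetP => X.
case/(tree_comps_addedgeP u v) => [[_ /ntu]|[_ tv]|[_ _ //]] //.
by case: ntu; apply: tree_comp_connect tv; rewrite connect_adjC.
Qed.

Lemma kappa_set0 : n <= kappa (set0 : {set {set 'I_n}}).
Proof.
have connect0E u z : connect (adj set0) u z -> z = u.
  move=> uz; apply/eqP; apply: (connect_ind (S := pred1 u)) uz => [|a b _].
  - exact: eqxx.
  - by rewrite /adj inE.
rewrite kappaE /tree_comps card_in_imset => [|a b _ _ eab].
  rewrite -[n in (n <= _)%N]card_ord -cardsT.
  apply/subset_leq_card/subsetP => w _; rewrite inE; apply/asboolP.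
  by move=> -[[|x [|y p]] [//= _ _ /andP[]]]; rewrite /adj inE.
have : a \in Defs.comp set0 a by rewrite inE connect0.
by rewrite eab inE => /connect0E.
Qed.

End TreeComponents.

Section Greedy.
Variables (P : graph_class) (n : nat).
Arguments P : clear implicits.
Implicit Types (E F : {set {set 'I_n}}) (r : seq {set 'I_n}).

Lemma proc_cat r1 r2 E : proc P (r1 ++ r2) E = proc P r2 (proc P r1 E).
Proof. by elim: r1 E => //= e r1 IH E. Qed.

Lemma proc_sub r E : proc P r E \subset E :|: [set e in r].
Proof.
elim: r E => [|e r IH] E /=; first by rewrite subsetUl.
apply: subset_trans (IH _) _; apply/subsetP => f; rewrite !inE.
by case: ifP => _; rewrite ?inE; do ! case/orP; move=> ->; rewrite ?orbT.
Qed.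

Lemma proc_in_class r E : P n E -> P n (proc P r E).
Proof. by elim: r E => //= e r IH E PE; apply: IH; case: ifP. Qed.

Hypotheses (P_edgeless : propB P) (P_addable : propE P)
  (P_tree_addable : Defs.propF P).

Lemma rejected_edge F x y : simple_graph F -> P n F -> x != y ->
  [set x; y] \notin F -> ~~ P n ([set x; y] |: F) ->
  connect (adj F) x y /\ ~ tree_comp F x.
Proof.
move=> simF PF xy xyF rej.
have cxy : connect (adj F) x y by apply: contraNT rej; apply: P_addable.
by split=> // tx; move: rej; rewrite P_tree_addable.
Qed.

Lemma greedy_kappa r : uniq r -> {in r, forall e : {set 'I_n}, #|e| = 2} ->
  n <= #|proc P r set0| + kappa [set e in r].
Proof.
elim/last_ind: r => [_ _|r e IH].
  have -> : [set e in [::]] = set0 :> {set {set 'I_n}} by apply/setP => f; rewrite !inE.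
  by rewrite cards0 kappa_set0.
rewrite rcons_uniq => /andP[er ur] r2.
have r2' : {in r, forall f : {set 'I_n}, #|f| = 2}.
  by move=> f fr; apply: r2; rewrite mem_rcons inE fr orbT.
have {IH} := IH ur r2'.
rewrite -cats1 proc_cat /=.
set F := proc P r set0; set G := [set f in r].
have sFG : F \subset G by rewrite -[G]set0U proc_sub.
have [x [y [xy exy]]] : exists x y, [/\ x != y & e = [set x; y]].
  by apply/cards2P/eqP; rewrite r2 // mem_rcons mem_head.
subst e.
have -> : [set f in r ++ [:: [set x; y]]] = [set x; y] |: G.
  by apply/setP => f; rewrite !inE mem_cat inE orbC.
have eF : [set x; y] \notin F by apply: (contra _ er) => /(subsetP sFG); rewrite inE.
case: ifP => Pe IH.
  rewrite cardsU1 eF add1n addSn; apply: leq_trans IH _; rewrite -addnS leq_add2l.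
  exact: kappa_addedge.
apply: leq_trans IH _; rewrite leq_add2l.
have simF : simple_graph F.
  by move=> f /(subsetP sFG); rewrite inE; apply: r2'.
have [cxy ntx] := rejected_edge simF (proc_in_class r (P_edgeless n)) xy eF (negbT Pe).
apply: kappa_addedge_nontree; first exact: connect_adj_sub cxy.
by move/(tree_comp_sub sFG).
Qed.

End Greedy.

Local Open Scope ring_scope.

Theorem mainTheorem6 (P : graph_class) (n : nat) (s : seq {set 'I_n}) (t : nat) :
  good_class P -> edge_ordering s -> (1 <= t <= size s)%N ->
  (t%:Z - #|Pnt P s t|%:Z <= excess (Gnt s t))%R.
Proof.
move=> [[_ P_edgeless _ _ P_addable] P_tree_addable] [us es] /andP[_ ts].
have ut : uniq (take t s) by apply: take_uniq.
have t2 : {in take t s, forall e : {set 'I_n}, #|e| = 2}.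
  by move=> e /mem_take; rewrite es => /eqP.
have cardG : #|Gnt s t| = t by rewrite cardsE (card_uniqP ut) size_takel.
have := greedy_kappa P_edgeless P_addable P_tree_addable ut t2.
rewrite /excess cardG /Pnt /Gnt; lia.
Qed.
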